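(* Let $b\in\mathbb{R}$ and $\varepsilon_0\in(0,1)$ be such that $\det\Delta_\varepsilon(s)\ne0$ for all $\varepsilon\in[0,\varepsilon_0]$ and all $s$ on the line $\Sigma=\{b+iy:y\in\mathbb{R}\}$. Then there is $\varepsilon_1\in(0,\varepsilon_0]$ such that $$\sup\{|s|\,\|\Delta_\varepsilon(s)^{-1}\|:0\le\varepsilon\le\varepsilon_1,\ s\in\Sigma\}<\infty\quad\text{and}\quad \sup\{|s|\,\|D_\varepsilon(s)^{-1}\|:0<\varepsilon\le\varepsilon_1,\ s\in\Sigma\}<\infty.$$
   Context: $L:C([-\tau,0];\mathbb{R}^N)\to\mathbb{R}^N$ is a bounded linear operator; $L(e^{s\cdot}I)$ is the complex $N\times N$ matrix whose $j$-th column is $L$ applied to $\theta\mapsto e^{s\theta}e_j$. $\Delta_\varepsilon(s)=\varepsilon^2s^2I-sI+L(e^{s\cdot}I)$, and for $\varepsilon>0$, $D_\varepsilon(s)$ is the $2N\times2N$ block matrix $\begin{pmatrix}sI&-I\\ \varepsilon^{-2}L(e^{s\cdot}I)&(s-\varepsilon^{-2})I\end{pmatrix}$ (the characteristic matrix of the first-order system equivalent to $\varepsilon^2x''-x'+Lx_t=0$), $I$ the $N\times N$ identity. *)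

From Stdlib Require Import Reals Arith.
Open Scope R_scope.

Record C := mkC { Re : R; Im : R }.
Definition C0 : C := mkC 0 0.
Definition C1 : C := mkC 1 0.
Definition RtoC (x : R) : C := mkC x 0.
Definition Cadd (z w : C) : C := mkC (Re z + Re w) (Im z + Im w).
Definition Copp (z : C) : C := mkC (- Re z) (- Im z).
Definition Csub (z w : C) : C := Cadd z (Copp w).
Definition Cmul (z w : C) : C :=
  mkC (Re z * Re w - Im z * Im w) (Re z * Im w + Im z * Re w).
Definition Cmod (z : C) : R := sqrt (Re z * Re z + Im z * Im z).
Definition Cinv (z : C) : C :=
  let d := Re z * Re z + Im z * Im z in mkC (Re z / d) (- Im z / d).
Definition Cdiv (z w : C) : C := Cmul z (Cinv w).

Definition cmat := nat -> nat -> C.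

Fixpoint Csum (n : nat) (f : nat -> C) : C :=
  match n with O => C0 | S m => Cadd (Csum m f) (f m) end.

Definition sgn (k : nat) : C := if Nat.even k then C1 else Copp C1.

Definition minor (r c : nat) (A : cmat) : cmat :=
  fun i j => A (if (i <? r)%nat then i else S i) (if (j <? c)%nat then j else S j).

Fixpoint det (n : nat) (A : cmat) : C :=
  match n with
  | O => C1
  | S m => Csum n (fun j => Cmul (sgn j) (Cmul (A O j) (det m (minor O j A))))
  end.

(* inverse by the adjugate formula (the inverse whenever det n A <> 0) *)
Definition inv (n : nat) (A : cmat) : cmat :=
  fun i j => Cdiv (Cmul (sgn (i + j)%nat) (det (pred n) (minor j i A))) (det n A).

(* functions [-tau,0] -> R^N are represented as R -> nat -> R
   (only theta in [-tau,0] and components k < N are meaningful) *)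
Definition cont_on (a b : R) (f : R -> R) : Prop :=
  forall x, a <= x <= b -> limit1_in f (fun y => a <= y <= b) (f x) x.

Definition in_CN (N : nat) (tau : R) (f : R -> nat -> R) : Prop :=
  forall k, (k < N)%nat -> cont_on (- tau) 0 (fun t => f t k).

Definition bounded_linear (N : nat) (tau : R) (L : (R -> nat -> R) -> nat -> R) : Prop :=
  (forall f g, in_CN N tau f -> in_CN N tau g -> forall i, (i < N)%nat ->
      L (fun t k => f t k + g t k) i = L f i + L g i) /\
  (forall (c : R) f, in_CN N tau f -> forall i, (i < N)%nat ->
      L (fun t k => c * f t k) i = c * L f i) /\
  (exists M, forall f (c : R), in_CN N tau f ->
      (forall t k, - tau <= t <= 0 -> (k < N)%nat -> Rabs (f t k) <= c) ->
      forall i, (i < N)%nat -> Rabs (L f i) <= M * c).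

(* L(e^{s.} I): column j is (complexified) L applied to theta |-> e^{s theta} e_j *)
Definition Lexp (L : (R -> nat -> R) -> nat -> R) (s : C) : cmat :=
  fun i j =>
    mkC (L (fun t k => if (k =? j)%nat then exp (Re s * t) * cos (Im s * t) else 0) i)
        (L (fun t k => if (k =? j)%nat then exp (Re s * t) * sin (Im s * t) else 0) i).

Definition delta (i j : nat) : C := if (i =? j)%nat then C1 else C0.

(* Delta_eps(s) = eps^2 s^2 I - s I + L(e^{s.} I) *)
Definition DeltaE (L : (R -> nat -> R) -> nat -> R) (eps : R) (s : C) : cmat :=
  fun i j => Cadd (Cmul (Csub (Cmul (RtoC (eps * eps)) (Cmul s s)) s) (delta i j))
                  (Lexp L s i j).

(* D_eps(s) = [[ s I , -I ], [ eps^-2 L(e^{s.} I) , (s - eps^-2) I ]], size 2N *)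
Definition Dmat (N : nat) (L : (R -> nat -> R) -> nat -> R) (eps : R) (s : C) : cmat :=
  fun i j =>
    if (i <? N)%nat then
      (if (j <? N)%nat then Cmul s (delta i j) else Copp (delta i (j - N)%nat))
    else
      (if (j <? N)%nat then Cmul (RtoC (/ (eps * eps))) (Lexp L s (i - N)%nat j)
       else Cmul (Csub s (RtoC (/ (eps * eps)))) (delta (i - N)%nat (j - N)%nat)).

(* Write [Delta_eps(s) = lam I + A(s)] with [lam = eps^2 s^2 - s = s (eps^2 s - 1)] and
   [A(s) = L(e^{s.} I)], whose entries are bounded on the line [Re s = b].  As long as
   [eps^2 |b| <= 1/2], the weight [|s| (1 + eps^2 |s|)] is at most [5 |lam|].  Far out on the
   line [lam] dominates [A], and [lam P = I - A P] for [P = Delta_eps(s)^-1] gives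
   [|lam| |P| <= 2].  On the remaining bounded segment, [|det Delta_0|] has a positive minimum
   and [det Delta_eps] is an [O(eps^2)] perturbation of it, so the adjugate formula bounds [P].
   Hence [|s| (1 + eps^2 |s|) |P|] is bounded uniformly for small [eps], and the explicit block
   inverse [D_eps(s)^-1 = [[(eps^2 s - 1) P, eps^2 P], [- A P, eps^2 s P]]] turns this into
   the bound for [D_eps]. *)

From Stdlib Require Import Reals Arith Lra Lia Psatz.
From Pilot Require Import Defs.
From HB Require Import structures.
From mathcomp Require all_boot all_algebra Rstruct.
Open Scope R_scope.

Lemma C_ext (z w : C) : Re z = Re w -> Im z = Im w -> z = w.
Proof. destruct z, w; simpl; intros; subst; reflexivity. Qed.

Definition shift_mx (lam : C) (A : cmat) : cmat :=
  fun i j => Cadd (Cmul lam (delta i j)) (A i j).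

Definition blockc (n : nat) (A11 A12 A21 A22 : cmat) : cmat := fun i j =>
  if (i <? n)%nat then (if (j <? n)%nat then A11 i j else A12 i (j - n)%nat)
  else (if (j <? n)%nat then A21 (i - n)%nat j else A22 (i - n)%nat (j - n)%nat).

Definition lam (eps : R) (s : C) : C := Csub (Cmul (RtoC (eps * eps)) (Cmul s s)) s.
Definition mu (eps : R) (s : C) : C := Csub (Cmul (RtoC (eps * eps)) s) C1.

Lemma DeltaE_shift L eps s : DeltaE L eps s = shift_mx (lam eps s) (Lexp L s).
Proof. reflexivity. Qed.

Lemma Dmat_blockc N L eps s : Dmat N L eps s =
  blockc N (fun i j => Cmul s (delta i j)) (fun i j => Copp (delta i j))
    (fun i j => Cmul (RtoC (/ (eps * eps))) (Lexp L s i j))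
    (fun i j => Cmul (Csub s (RtoC (/ (eps * eps)))) (delta i j)).
Proof. reflexivity. Qed.

(* Making [C] a MathComp field identifies the Laplace-expansion [det] and the adjugate [inv]
   of the statement with [\det] and [invmx]. *)
Module ComplexMatrix.
Import all_boot all_algebra Rstruct GRing.Theory.

Definition C_pair (z : C) : R * R := (Re z, Im z).
Definition pair_C (p : R * R) : C := mkC p.1 p.2.
Lemma C_pairK : cancel C_pair pair_C. Proof. by case. Qed.

HB.instance Definition _ := Choice.copy C (can_type C_pairK).

Lemma CaddA : associative Cadd. Proof. by move=> x y z; apply: C_ext => /=; ring. Qed.
Lemma CaddC : commutative Cadd. Proof. by move=> x y; apply: C_ext => /=; ring. Qed.
Lemma Cadd0 : left_id C0 Cadd. Proof. by move=> x; apply: C_ext => /=; ring. Qed.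
Lemma CaddN : left_inverse C0 Copp Cadd. Proof. by move=> x; apply: C_ext => /=; ring. Qed.

HB.instance Definition _ := GRing.isZmodule.Build C CaddA CaddC Cadd0 CaddN.

Lemma CmulA : associative Cmul. Proof. by move=> x y z; apply: C_ext => /=; ring. Qed.
Lemma CmulC : commutative Cmul. Proof. by move=> x y; apply: C_ext => /=; ring. Qed.
Lemma Cmul1 : left_id C1 Cmul. Proof. by move=> x; apply: C_ext => /=; ring. Qed.
Lemma CmulDl : left_distributive Cmul Cadd.
Proof. by move=> x y z; apply: C_ext => /=; ring. Qed.
Lemma C1_neq0 : C1 != C0.
Proof. by apply/eqP => /(f_equal Re) /=; lra. Qed.

HB.instance Definition _ :=
  GRing.Zmodule_isComNzRing.Build C CmulA CmulC Cmul1 CmulDl C1_neq0.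

Lemma CmulVx (x : C) : x != 0%R -> Cmul (Cinv x) x = C1.
Proof.
move=> /eqP hx; have hd : Re x * Re x + Im x * Im x <> 0.
  by move=> h; apply: hx; apply: C_ext => /=; nra.
by apply: C_ext => /=; field.
Qed.

Lemma Cinv0 : Cinv C0 = C0.
Proof. by apply: C_ext => /=; rewrite /Rdiv; ring. Qed.

HB.instance Definition _ := GRing.ComNzRing_isField.Build C CmulVx Cinv0.

Local Open Scope ring_scope.

Definition mx (n : nat) (A : cmat) : 'M[C]_n := \matrix_(i < n, j < n) A i j.

Lemma Csum_big n (f : nat -> C) : Csum n f = \sum_(j < n) f j.
Proof. by elim: n => [|n IH]; rewrite ?big_ord0 // big_ord_recr /= IH. Qed.

Lemma sgn_sign k : sgn k = (-1) ^+ k.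
Proof.
elim: k => [//|k IH]; rewrite exprS -IH /sgn Nat.even_succ -Nat.negb_even.
by case: (Nat.even k); rewrite /= ?mulN1r ?opprK.
Qed.

Lemma ltb_ltn (k n : nat) : (k <? n)%nat = (k < n)%N.
Proof. by apply/idP/idP => [/Nat.ltb_lt/ltP | /ltP/Nat.ltb_lt]. Qed.

Lemma delta_nat (i k : nat) : delta i k = (i == k)%:R.
Proof. by rewrite /delta; case: (Nat.eqb_spec i k) => [->|/eqP/negbTE->]; rewrite ?eqxx. Qed.

Lemma minor_mx m (A : cmat) (r c : 'I_m.+1) :
  mx m (minor r c A) = row' r (col' c (mx m.+1 A)).
Proof.
apply/matrixP => i j; rewrite !mxE /minor !ltb_ltn.
by congr A; rewrite /= /bump; case: ltnP.
Qed.

Lemma det_mx n (A : cmat) : det n A = \det (mx n A).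
Proof.
elim: n A => [|m IH] A; first by rewrite det_mx00.
change (det m.+1 A) with
  (Csum m.+1 (fun j => Cmul (sgn j) (Cmul (A O j) (det m (minor O j A))))).
rewrite (expand_det_row _ ord0) Csum_big; apply: eq_bigr => j _.
by rewrite /cofactor IH (minor_mx m A ord0 j) !mxE sgn_sign add0n mulrCA.
Qed.

Lemma unitmx_det {n} {A : cmat} : det n A <> C0 -> mx n A \in unitmx.
Proof. by move=> h; rewrite unitmxE unitfE -det_mx; apply/eqP. Qed.

Lemma inv_invmx {n} {A : cmat} (i j : 'I_n) :
  det n A <> C0 -> Defs.inv n A i j = invmx (mx n A) i j.
Proof.
case: n A i j => [|m] A [i hi] [j hj] // hd.
rewrite /invmx unitmx_det // !mxE /cofactor /Defs.inv /Cdiv.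
change (Nat.pred m.+1) with m.
rewrite !det_mx (minor_mx m A (Ordinal hj) (Ordinal hi)) sgn_sign.
by rewrite plusE addnC; apply: mulrC.
Qed.

Lemma inv_shift_row n (lam : C) (A : cmat) i j : (i < n)%coq_nat -> (j < n)%coq_nat ->
  det n (shift_mx lam A) <> C0 ->
  Cadd (Cmul lam (Defs.inv n (shift_mx lam A) i j))
       (Csum n (fun k => Cmul (A i k) (Defs.inv n (shift_mx lam A) k j))) = delta i j.
Proof.
move=> /ltP hi /ltP hj hd.
have := congr1 (fun M : 'M[C]_n => M (Ordinal hi) (Ordinal hj)) (mulmxV (unitmx_det hd)).
rewrite !mxE delta_nat => <-.
under [RHS]eq_bigr do rewrite mxE -inv_invmx // mulrDl.
rewrite big_split /= Csum_big; congr (_ + _).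
rewrite (bigD1 (Ordinal hi)) //= big1 ?addr0 => [|k hk]; rewrite delta_nat.
  by rewrite eqxx; apply: C_ext => /=; ring.
have /negPf-> : i != k by rewrite eq_sym -(inj_eq val_inj) in hk.
by apply: C_ext => /=; ring.
Qed.

Lemma castmx_mulmx1 (R : nzRingType) m n (e : m = n) (A B : 'M[R]_m) :
  A *m B = 1%:M -> castmx (e, e) A *m castmx (e, e) B = 1%:M.
Proof. by case: n / e; rewrite !castmx_id. Qed.

Lemma addnn_mul2 n : (n + n = 2 * n)%N.
Proof. by rewrite addnn mul2n. Qed.

Lemma mx_blockc n (A11 A12 A21 A22 : cmat) :
  mx (2 * n) (blockc n A11 A12 A21 A22) =
  castmx (addnn_mul2 n, addnn_mul2 n)
    (block_mx (mx n A11) (mx n A12) (mx n A21) (mx n A22)).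
Proof.
apply/matrixP => i j; rewrite castmxE !mxE /blockc !ltb_ltn minusE.
rewrite -[(i < n)%N]/(cast_ord (esym (addnn_mul2 n)) i < n)%N.
rewrite -[(j < n)%N]/(cast_ord (esym (addnn_mul2 n)) j < n)%N.
case: splitP => [i' /= -> | i' /= ->]; rewrite mxE;
  case: (splitP (cast_ord (esym (addnn_mul2 n)) j)) => [j' /= -> | j' /= ->];
  rewrite ?mxE ?addKn //.
Qed.

Lemma inv_blockc n (A11 A12 A21 A22 X11 X12 X21 X22 : cmat) i j :
  (i < 2 * n)%coq_nat -> (j < 2 * n)%coq_nat ->
  block_mx (mx n A11) (mx n A12) (mx n A21) (mx n A22)
    *m block_mx (mx n X11) (mx n X12) (mx n X21) (mx n X22) = 1%:M ->
  Defs.inv (2 * n) (blockc n A11 A12 A21 A22) i j = blockc n X11 X12 X21 X22 i j.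
Proof.
move=> /ltP hi /ltP hj hAX.
pose A := mx (2 * n) (blockc n A11 A12 A21 A22).
pose X := mx (2 * n) (blockc n X11 X12 X21 X22).
have AX1 : A *m X = 1%:M by rewrite /A /X !mx_blockc castmx_mulmx1.
have [uA _] := mulmx1_unit AX1.
have invA : invmx A = X by rewrite -[invmx A]mulmx1 -AX1 mulmxA mulVmx // mul1mx.
have dA : det (2 * n) (blockc n A11 A12 A21 A22) <> C0.
  by rewrite det_mx; move: uA; rewrite unitmxE unitfE => /eqP.
by rewrite (inv_invmx (Ordinal hi) (Ordinal hj) dA) -/A invA mxE.
Qed.

Lemma block_inverse (R : comNzRingType) n (s e e' : R) (A P : 'M[R]_n) :
  e' * e = 1 -> ((s * (e * s - 1))%:M + A) *m P = 1%:M ->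
  block_mx s%:M (- 1%:M) (e' *: A) ((s - e')%:M)
    *m block_mx ((e * s - 1) *: P) (e *: P) (- (A *m P)) ((e * s) *: P) = 1%:M.
Proof.
move=> ee' AP1; rewrite mulmx_block [RHS]scalar_mx_block !mul_scalar_mx.
rewrite !mulNmx !mul1mx opprK -!scalemxAl -!scalemxAr !scalerA.
congr block_mx.
- by rewrite -AP1 mulmxDl mul_scalar_mx.
- by rewrite mulrC subrr.
- by rewrite scalerN -scalerBl mulrBr mulrA ee' mul1r mulr1 subrr scale0r.
- rewrite ee' scale1r -AP1 mulmxDl mul_scalar_mx addrC; congr (_ *: _ + _).
  by rewrite mulrBl [e' * _]mulrA ee' mul1r mulrBr mulr1.
Qed.

Lemma mx_delta n : mx n delta = 1%:M.
Proof. by apply/matrixP => i j; rewrite !mxE delta_nat. Qed.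

Lemma mx_scale n c (A : cmat) : mx n (fun i j => Cmul c (A i j)) = c *: mx n A.
Proof. by apply/matrixP => i j; rewrite !mxE. Qed.

Lemma mx_opp n (A : cmat) : mx n (fun i j => Copp (A i j)) = - mx n A.
Proof. by apply/matrixP => i j; rewrite !mxE. Qed.

Lemma mx_mul n (A B : cmat) :
  mx n (fun i j => Csum n (fun k => Cmul (A i k) (B k j))) = mx n A *m mx n B.
Proof. by apply/matrixP => i j; rewrite !mxE Csum_big; apply: eq_bigr => k _; rewrite !mxE. Qed.

Lemma mx_shift n lam (A : cmat) : mx n (shift_mx lam A) = lam%:M + mx n A.
Proof.
apply/matrixP => i j; rewrite !mxE /shift_mx delta_nat.
by rewrite -[lam *+ _]mulr_natr.
Qed.

Lemma mx_inv {n} {A : cmat} : det n A <> C0 -> mx n (Defs.inv n A) = invmx (mx n A).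
Proof. by move=> hd; apply/matrixP => i j; rewrite mxE inv_invmx. Qed.

Local Close Scope ring_scope.

Lemma inv_Dmat N L (eps : R) (s : C) i j : eps <> 0 -> det N (DeltaE L eps s) <> C0 ->
  (i < 2 * N)%coq_nat -> (j < 2 * N)%coq_nat ->
  let P := Defs.inv N (DeltaE L eps s) in
  Defs.inv (2 * N)%coq_nat (Dmat N L eps s) i j =
  blockc N (fun k l => Cmul (mu eps s) (P k l)) (fun k l => Cmul (RtoC (eps * eps)) (P k l))
    (fun k l => Copp (Csum N (fun m => Cmul (Lexp L s k m) (P m l))))
    (fun k l => Cmul (Cmul (RtoC (eps * eps)) s) (P k l)) i j.
Proof.
Local Open Scope ring_scope.
move=> he hd hi hj P; rewrite Dmat_blockc; apply: inv_blockc => //.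
rewrite !mx_scale !mx_opp mx_mul mx_delta !scalemx1 (mx_inv hd).
have lam_factor : lam eps s = s * (RtoC (eps * eps) * s - 1) by apply: C_ext => /=; ring.
apply: block_inverse; first by apply: C_ext => /=; field.
by rewrite -lam_factor -mx_shift -DeltaE_shift mulmxV // unitmx_det.
Qed.

End ComplexMatrix.

Lemma Rabs_le_inv x a : Rabs x <= a -> - a <= x <= a.
Proof. intros H; pose proof (RRle_abs x); pose proof (RRle_abs (- x)); rewrite Rabs_Ropp in *; lra. Qed.

Lemma small_factor_exists a c : 0 < a -> 0 <= c -> exists e, 0 < e <= 1 /\ e * c <= a.
Proof.
intros Ha Hc; exists (Rmin 1 (a / (c + 1))); split; [split|].
- apply Rmin_glb_lt; [lra | apply Rdiv_lt_0_compat; lra].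
- apply Rmin_l.
- apply Rle_trans with (a / (c + 1) * c); [apply Rmult_le_compat_r; [lra | apply Rmin_r]|].
  apply (Rmult_le_reg_l (c + 1)); [lra|].
  replace ((c + 1) * (a / (c + 1) * c)) with (a * c) by (field; lra); nra.
Qed.

Lemma Cmod_ge0 z : 0 <= Cmod z.
Proof. apply sqrt_pos. Qed.

Lemma Cmod_sq z : Cmod z * Cmod z = Re z * Re z + Im z * Im z.
Proof. apply sqrt_sqrt; nra. Qed.

Lemma Cmod_le_sq z a : 0 <= a -> Re z * Re z + Im z * Im z <= a * a -> Cmod z <= a.
Proof.
intros Ha H; unfold Cmod; rewrite <- (sqrt_Rsqr a Ha).
apply sqrt_le_1_alt; unfold Rsqr; lra.
Qed.

Lemma Cmod_ge_sq z a : 0 <= a -> a * a <= Re z * Re z + Im z * Im z -> a <= Cmod z.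
Proof.
intros Ha H; unfold Cmod; rewrite <- (sqrt_Rsqr a Ha).
apply sqrt_le_1_alt; unfold Rsqr; lra.
Qed.

Lemma Cmod_mul z w : Cmod (Cmul z w) = Cmod z * Cmod w.
Proof. unfold Cmod; rewrite <- sqrt_mult by nra; f_equal; simpl; ring. Qed.

Lemma Cmod_add z w : Cmod (Cadd z w) <= Cmod z + Cmod w.
Proof.
pose proof (Cmod_sq z); pose proof (Cmod_sq w); pose proof (Cmod_ge0 z); pose proof (Cmod_ge0 w).
assert (CS : Re z * Re w + Im z * Im w <= Cmod z * Cmod w).
{ apply Rsqr_incr_0_var; [unfold Rsqr | nra].
  replace (Cmod z * Cmod w * (Cmod z * Cmod w)) with ((Cmod z * Cmod z) * (Cmod w * Cmod w))
    by ring.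
  rewrite H, H0; pose proof (Rle_0_sqr (Re z * Im w - Im z * Re w)); unfold Rsqr in *; nra. }
apply Cmod_le_sq; simpl; nra.
Qed.

Lemma Cmod_opp z : Cmod (Copp z) = Cmod z.
Proof. unfold Cmod; simpl; f_equal; ring. Qed.

Lemma Cmod_sub z w : Cmod (Csub z w) <= Cmod z + Cmod w.
Proof. rewrite <- (Cmod_opp w); apply Cmod_add. Qed.

Lemma Cmod_triang_inv z w : Rabs (Cmod z - Cmod w) <= Cmod (Csub z w).
Proof.
assert (Ez : z = Cadd (Csub z w) w) by (apply C_ext; simpl; ring).
assert (Ew : w = Cadd (Copp (Csub z w)) z) by (apply C_ext; simpl; ring).
pose proof (Cmod_add (Csub z w) w) as Hz; pose proof (Cmod_add (Copp (Csub z w)) z) as Hw.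
rewrite <- Ez in Hz; rewrite <- Ew, Cmod_opp in Hw.
apply Rabs_le; lra.
Qed.

Lemma Cmod_RtoC x : Cmod (RtoC x) = Rabs x.
Proof. unfold Cmod, RtoC; simpl; rewrite <- sqrt_Rsqr_abs; f_equal; unfold Rsqr; ring. Qed.

Lemma Cmod_C0 : Cmod C0 = 0.
Proof. unfold Cmod; simpl; replace (0 * 0 + 0 * 0) with 0 by ring; apply sqrt_0. Qed.

Lemma Cmod_C1 : Cmod C1 = 1.
Proof. unfold Cmod; simpl; replace (1 * 1 + 0 * 0) with 1 by ring; apply sqrt_1. Qed.

Lemma Cmod_sgn k : Cmod (sgn k) = 1.
Proof. unfold sgn; destruct (Nat.even k); rewrite ?Cmod_opp; apply Cmod_C1. Qed.

Lemma Cmod_delta i j : Cmod (delta i j) <= 1.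
Proof. unfold delta; destruct (i =? j)%nat; rewrite ?Cmod_C1, ?Cmod_C0; lra. Qed.

Lemma Rabs_Im_le z : Rabs (Im z) <= Cmod z.
Proof. apply Cmod_ge_sq; [apply Rabs_pos | rewrite <- Rabs_mult, Rabs_pos_eq; nra]. Qed.

Lemma Cmod_le_Re_Im z : Cmod z <= Rabs (Re z) + Rabs (Im z).
Proof.
pose proof (Rabs_pos (Re z)); pose proof (Rabs_pos (Im z)).
pose proof (Rsqr_abs (Re z)); pose proof (Rsqr_abs (Im z)); unfold Rsqr in *.
apply Cmod_le_sq; nra.
Qed.

Lemma Cmod_gt0 z : z <> C0 -> 0 < Cmod z.
Proof.
intros Hz; apply sqrt_lt_R0.
destruct (Req_dec (Re z) 0), (Req_dec (Im z) 0); try nra.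
exfalso; apply Hz, C_ext; assumption.
Qed.

Lemma Cmod_div z w : w <> C0 -> Cmod (Cdiv z w) = Cmod z / Cmod w.
Proof.
intros Hw; pose proof (Cmod_gt0 w Hw) as Hp.
assert (Hd : Re w * Re w + Im w * Im w <> 0) by (rewrite <- Cmod_sq; nra).
assert (Cmul (Cinv w) w = C1) by (apply C_ext; simpl; field; exact Hd).
assert (Cmod (Cinv w) * Cmod w = 1) by (rewrite <- Cmod_mul, H; apply Cmod_C1).
unfold Cdiv; rewrite Cmod_mul; unfold Rdiv; f_equal.
apply (Rmult_eq_reg_r (Cmod w)); [rewrite Rinv_l |]; lra.
Qed.

Lemma Csum_bound n (f : nat -> C) c :
  (forall j, (j < n)%nat -> Cmod (f j) <= c) -> Cmod (Csum n f) <= INR n * c.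
Proof.
induction n as [|n IH]; intros H; simpl Csum.
- rewrite Cmod_C0; simpl; lra.
- rewrite S_INR; eapply Rle_trans; [apply Cmod_add|].
  assert (Cmod (Csum n f) <= INR n * c) by (apply IH; intros; apply H; lia).
  assert (Cmod (f n) <= c) by (apply H; lia).
  lra.
Qed.

Lemma Csum_sub n (f g : nat -> C) :
  Csub (Csum n f) (Csum n g) = Csum n (fun j => Csub (f j) (g j)).
Proof.
induction n as [|n IH]; simpl; [|rewrite <- IH]; apply C_ext; simpl; ring.
Qed.

Lemma Cmul_Csum z n (f : nat -> C) : Cmul z (Csum n f) = Csum n (fun m => Cmul z (f m)).
Proof. induction n as [|n IH]; simpl; [|rewrite <- IH]; apply C_ext; simpl; ring. Qed.

Lemma det_S m (A : cmat) :
  det (S m) A = Csum (S m) (fun j => Cmul (sgn j) (Cmul (A O j) (det m (minor O j A)))).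
Proof. reflexivity. Qed.

Definition entries_le (n : nat) (A : cmat) (K : R) : Prop :=
  forall i j, (i < n)%nat -> (j < n)%nat -> Cmod (A i j) <= K.

Lemma entries_le_minor m (A : cmat) K r c :
  entries_le (S m) A K -> entries_le m (minor r c A) K.
Proof.
intros H i j Hi Hj; unfold minor.
apply H; [destruct (i <? r)%nat | destruct (j <? c)%nat]; lia.
Qed.

Lemma det_bound n (A : cmat) K : 0 <= K -> entries_le n A K ->
  Cmod (det n A) <= INR (fact n) * K ^ n.
Proof.
revert A; induction n as [|m IH]; intros A HK H.
- simpl; rewrite Cmod_C1; lra.
- rewrite det_S.
  replace (INR (fact (S m)) * K ^ S m) with (INR (S m) * (K * (INR (fact m) * K ^ m)))
    by (rewrite fact_simpl, mult_INR; simpl; ring).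
  apply Csum_bound; intros j Hj.
  rewrite !Cmod_mul, Cmod_sgn.
  assert (H1 : Cmod (A O j) <= K) by (apply H; lia).
  assert (H2 : Cmod (det m (minor O j A)) <= INR (fact m) * K ^ m)
    by (apply IH; [|apply entries_le_minor]; assumption).
  pose proof (Cmod_ge0 (A O j)); pose proof (Cmod_ge0 (det m (minor O j A))).
  nra.
Qed.

Fixpoint det_lip_const (n : nat) (K : R) : R :=
  match n with
  | O => 0
  | S m => INR (S m) * (INR (fact m) * K ^ m + K * det_lip_const m K)
  end.

Lemma det_lip_const_S m K :
  det_lip_const (S m) K = INR (S m) * (INR (fact m) * K ^ m + K * det_lip_const m K).
Proof. reflexivity. Qed.

Lemma det_lip_const_ge0 n K : 0 <= K -> 0 <= det_lip_const n K.
Proof.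
intros HK; induction n as [|m IH]; [simpl; lra|]; rewrite det_lip_const_S.
pose proof (pos_INR (S m)); pose proof (INR_fact_lt_0 m); pose proof (pow_le K m HK).
apply Rmult_le_pos; nra.
Qed.

Lemma det_lipschitz n (A B : cmat) K d : 0 <= K ->
  entries_le n A K -> entries_le n B K ->
  (forall i j, (i < n)%nat -> (j < n)%nat -> Cmod (Csub (A i j) (B i j)) <= d) ->
  Cmod (Csub (det n A) (det n B)) <= det_lip_const n K * d.
Proof.
revert A B; induction n as [|m IH]; intros A B HK HA HB HAB.
- simpl; replace (Csub C1 C1) with C0 by (apply C_ext; simpl; ring); rewrite Cmod_C0; lra.
- rewrite !det_S, Csum_sub, det_lip_const_S, Rmult_assoc.
  apply Csum_bound; intros j Hj.
  set (dA := det m (minor O j A)); set (dB := det m (minor O j B)).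
  replace (Csub (Cmul (sgn j) (Cmul (A O j) dA)) (Cmul (sgn j) (Cmul (B O j) dB)))
    with (Cmul (sgn j) (Cadd (Cmul (Csub (A O j) (B O j)) dA) (Cmul (B O j) (Csub dA dB))))
    by (apply C_ext; simpl; ring).
  rewrite Cmod_mul, Cmod_sgn, Rmult_1_l.
  eapply Rle_trans; [apply Cmod_add|]; rewrite !Cmod_mul.
  assert (H0 : 0 <= d) by (eapply Rle_trans; [apply Cmod_ge0 | apply (HAB O O); lia]).
  assert (H1 : Cmod (Csub (A O j) (B O j)) <= d) by (apply HAB; lia).
  assert (H2 : Cmod dA <= INR (fact m) * K ^ m)
    by (apply det_bound; [|apply entries_le_minor]; assumption).
  assert (H3 : Cmod (B O j) <= K) by (apply HB; lia).
  assert (H4 : Cmod (Csub dA dB) <= det_lip_const m K * d).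
  { apply IH; try apply entries_le_minor; try assumption.
    intros i k Hi Hk; unfold minor; apply HAB;
      [destruct (i <? O)%nat | destruct (k <? j)%nat]; lia. }
  pose proof (Cmod_ge0 (Csub (A O j) (B O j))); pose proof (Cmod_ge0 dA);
  pose proof (Cmod_ge0 (B O j)); pose proof (Cmod_ge0 (Csub dA dB)).
  pose proof (INR_fact_lt_0 m); pose proof (pow_le K m HK); pose proof (det_lip_const_ge0 m K HK).
  nra.
Qed.

Lemma inv_entry_bound n (A : cmat) K d i j : 0 <= K -> 0 < d ->
  entries_le n A K -> d <= Cmod (det n A) -> (i < n)%nat -> (j < n)%nat ->
  Cmod (inv n A i j) <= INR (fact (pred n)) * K ^ pred n / d.
Proof.
intros HK Hd HA Hdet Hi Hj; destruct n as [|m]; [lia|].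
assert (Hnz : det (S m) A <> C0) by (intros E; rewrite E, Cmod_C0 in Hdet; lra).
unfold inv; rewrite Cmod_div, Cmod_mul, Cmod_sgn, Rmult_1_l by exact Hnz; simpl pred.
unfold Rdiv; apply Rmult_le_compat.
- apply Cmod_ge0.
- left; apply Rinv_0_lt_compat; lra.
- apply det_bound; [|apply entries_le_minor]; assumption.
- apply Rinv_le_contravar; assumption.
Qed.

Lemma blockc_forall (Q : C -> Prop) n (A11 A12 A21 A22 : cmat) i j :
  (i < 2 * n)%nat -> (j < 2 * n)%nat ->
  (forall k l, (k < n)%nat -> (l < n)%nat -> Q (A11 k l)) ->
  (forall k l, (k < n)%nat -> (l < n)%nat -> Q (A12 k l)) ->
  (forall k l, (k < n)%nat -> (l < n)%nat -> Q (A21 k l)) ->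
  (forall k l, (k < n)%nat -> (l < n)%nat -> Q (A22 k l)) ->
  Q (blockc n A11 A12 A21 A22 i j).
Proof.
intros Hi Hj H11 H12 H21 H22; unfold blockc.
destruct (Nat.ltb_spec i n), (Nat.ltb_spec j n);
  [apply H11 | apply H12 | apply H21 | apply H22]; lia.
Qed.

Lemma entries_le_shift n lam (A : cmat) K :
  entries_le n A K -> entries_le n (shift_mx lam A) (Cmod lam + K).
Proof.
intros HA i j Hi Hj; unfold shift_mx.
eapply Rle_trans; [apply Cmod_add|]; rewrite Cmod_mul.
pose proof (Cmod_delta i j); pose proof (Cmod_ge0 lam); pose proof (HA i j Hi Hj); nra.
Qed.

Lemma argmax_below n (f : nat -> R) : (0 < n)%nat ->
  exists i, (i < n)%nat /\ forall k, (k < n)%nat -> f k <= f i.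
Proof.
induction n as [|n IH]; intros Hn; [lia|].
destruct (Nat.eq_dec n 0) as [->|Hn0].
- exists O; split; [lia|]; intros k Hk; replace k with O by lia; lra.
- destruct (IH ltac:(lia)) as [i [Hi Hmax]].
  destruct (Rle_dec (f n) (f i)) as [Hle|Hgt].
  + exists i; split; [lia|]; intros k Hk.
    destruct (Nat.eq_dec k n) as [->|]; [lra | apply Hmax; lia].
  + exists n; split; [lia|]; intros k Hk.
    destruct (Nat.eq_dec k n) as [->|]; [lra|].
    specialize (Hmax k ltac:(lia)); lra.
Qed.

(* Neumann-type estimate: [lam P = I - A P] bounds the largest entry [p] of a column of
   [P] by [|lam| p <= 1 + n K p], which absorbs the last term once [|lam| >= 2 n K]. *)
Lemma inv_shift_large n (lam : C) (A : cmat) K i j :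
  entries_le n A K -> det n (shift_mx lam A) <> C0 -> 2 * INR n * K <= Cmod lam ->
  (i < n)%nat -> (j < n)%nat ->
  Cmod lam * Cmod (inv n (shift_mx lam A) i j) <= 2.
Proof.
intros HA Hdet Hlam Hi Hj.
set (P := inv n (shift_mx lam A)).
destruct (argmax_below n (fun k => Cmod (P k j)) ltac:(lia)) as [i0 [Hi0 Hmax]].
set (p := Cmod (P i0 j)).
assert (Hrow : forall k, (k < n)%nat -> Cmod lam * Cmod (P k j) <= 1 + INR n * (K * p)).
{ intros k Hk.
  pose proof (ComplexMatrix.inv_shift_row n lam A k j Hk Hj Hdet) as E; fold P in E.
  rewrite <- Cmod_mul.
  replace (Cmul lam (P k j))
    with (Csub (delta k j) (Csum n (fun l => Cmul (A k l) (P l j))))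
    by (rewrite <- E; apply C_ext; simpl; ring).
  eapply Rle_trans; [apply Cmod_sub|].
  apply Rplus_le_compat; [apply Cmod_delta|].
  apply Csum_bound; intros l Hl; rewrite Cmod_mul.
  apply Rmult_le_compat; try apply Cmod_ge0; [apply HA | apply Hmax]; assumption. }
assert (HK : 0 <= K) by (eapply Rle_trans; [apply Cmod_ge0 | apply (HA O O); lia]).
assert (Hp : Cmod lam * p <= 2).
{ specialize (Hrow i0 Hi0); fold p in Hrow.
  assert (0 <= p) by apply Cmod_ge0.
  assert (INR n * (K * p) <= Cmod lam * p / 2) by nra.
  lra. }
specialize (Hmax i Hi); pose proof (Cmod_ge0 lam).
eapply Rle_trans; [apply Rmult_le_compat_l; [|exact Hmax]|]; assumption.
Qed.

Lemma Cmod_det_continuity n (A : R -> cmat) c K Lc : 0 <= K -> 0 <= Lc ->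
  (forall y, Rabs (y - c) < 1 -> entries_le n (A y) K) ->
  (forall y i j, (i < n)%nat -> (j < n)%nat ->
     Cmod (Csub (A y i j) (A c i j)) <= Lc * Rabs (y - c)) ->
  continuity_pt (fun y => Cmod (det n (A y))) c.
Proof.
intros HK HLc Hbd Hlip e He.
set (Lp := det_lip_const n K * Lc).
assert (HLp : 0 <= Lp) by (pose proof (det_lip_const_ge0 n K HK); unfold Lp; nra).
exists (Rmin 1 (e / (Lp + 1))); split.
{ apply Rmin_glb_lt; [lra | apply Rdiv_lt_0_compat; lra]. }
intros y [_ Hy]; simpl in *; unfold R_dist in *.
assert (Hy1 : Rabs (y - c) < 1) by (eapply Rlt_le_trans; [exact Hy | apply Rmin_l]).
assert (Hy2 : Rabs (y - c) < e / (Lp + 1)) by (eapply Rlt_le_trans; [exact Hy | apply Rmin_r]).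
eapply Rle_lt_trans; [apply Cmod_triang_inv|].
eapply Rle_lt_trans; [apply (det_lipschitz n _ _ K (Lc * Rabs (y - c)) HK); auto|].
- apply Hbd; rewrite Rminus_diag, Rabs_R0; lra.
- replace (det_lip_const n K * (Lc * Rabs (y - c))) with (Lp * Rabs (y - c)) by (unfold Lp; ring).
  apply Rle_lt_trans with (Lp * (e / (Lp + 1))); [apply Rmult_le_compat_l; lra|].
  apply (Rmult_lt_reg_r (Lp + 1)); [lra|].
  replace (Lp * (e / (Lp + 1)) * (Lp + 1)) with (Lp * e) by (field; lra); nra.
Qed.

Definition L_bounded_by (N : nat) (tau : R) (L : (R -> nat -> R) -> nat -> R) (M : R) : Prop :=
  forall f (c : R), in_CN N tau f ->
    (forall t k, - tau <= t <= 0 -> (k < N)%nat -> Rabs (f t k) <= c) ->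
    forall i, (i < N)%nat -> Rabs (L f i) <= M * c.

Lemma in_CN_add N tau f g :
  in_CN N tau f -> in_CN N tau g -> in_CN N tau (fun t k => f t k + g t k).
Proof. intros Hf Hg k Hk x Hx; apply limit_plus; [apply Hf | apply Hg]; assumption. Qed.

Lemma in_CN_scal N tau (c : R) f : in_CN N tau f -> in_CN N tau (fun t k => c * f t k).
Proof.
intros Hf k Hk x Hx; apply (limit_mul (fun _ => c) (fun t => f t k)).
- exact (limit_free (fun _ => c) _ x x).
- apply Hf; assumption.
Qed.

Lemma L_sub N tau L f g i : bounded_linear N tau L -> in_CN N tau f -> in_CN N tau g ->
  (i < N)%nat -> L f i - L g i = L (fun t k => f t k + -1 * g t k) i.
Proof.
intros [Hadd [Hscal _]] Hf Hg Hi.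
rewrite (Hadd f _ Hf (in_CN_scal N tau (-1) g Hg) i Hi), (Hscal (-1) g Hg i Hi); ring.
Qed.

Definition exp_wave (b y : R) (w : R -> R) (j : nat) : R -> nat -> R :=
  fun t k => if (k =? j)%nat then exp (b * t) * w (y * t) else 0.

Lemma Lexp_waves L b y i j :
  Lexp L (mkC b y) i j = mkC (L (exp_wave b y cos j) i) (L (exp_wave b y sin j) i).
Proof. reflexivity. Qed.

Lemma continuity_limit1_in f D x : continuity_pt f x -> limit1_in f D (f x) x.
Proof.
intros Hc e He; destruct (Hc e He) as [a [Ha Hd]]; exists a; split; [exact Ha|].
intros t [_ Ht]; destruct (Req_dec t x) as [->|Hne].
- simpl; rewrite R_dist_eq; lra.
- apply Hd; repeat split; auto.
Qed.

Lemma exp_wave_CN N tau b y w j : (forall x, continuity_pt w x) -> in_CN N tau (exp_wave b y w j).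
Proof.
intros Hw k Hk x Hx; unfold exp_wave; destruct (k =? j)%nat.
- apply (continuity_limit1_in (fun t => exp (b * t) * w (y * t))), continuity_pt_mult.
  + apply (continuity_pt_comp (fun t => b * t) exp); [reg | apply derivable_continuous_pt; reg].
  + apply (continuity_pt_comp (fun t => y * t) w); [reg | apply Hw].
- exact (limit_free (fun _ => 0) _ x x).
Qed.

Lemma cos_lipschitz u v : Rabs (cos u - cos v) <= Rabs (u - v).
Proof.
destruct (MVT_abs cos (fun x => - sin x) v u) as [c [Hc _]];
  [intros; apply derivable_pt_lim_cos|].
rewrite Hc, Rabs_Ropp; pose proof (Rabs_pos (u - v)).
assert (Rabs (sin c) <= 1) by (apply Rabs_le, SIN_bound); nra.
Qed.

Lemma sin_lipschitz u v : Rabs (sin u - sin v) <= Rabs (u - v).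
Proof.
destruct (MVT_abs sin cos v u) as [c [Hc _]]; [intros; apply derivable_pt_lim_sin|].
rewrite Hc; pose proof (Rabs_pos (u - v)).
assert (Rabs (cos c) <= 1) by (apply Rabs_le, COS_bound); nra.
Qed.

Lemma exp_le_window b tau t : -tau <= t <= 0 -> exp (b * t) <= exp (Rabs b * tau).
Proof.
intros Ht; assert (H : b * t <= Rabs b * tau)
  by (destruct (Rcase_abs b); [rewrite Rabs_left | rewrite Rabs_right]; nra).
destruct (Rle_lt_or_eq_dec _ _ H) as [Hlt|Heq]; [left; apply exp_increasing, Hlt | rewrite Heq; lra].
Qed.

Section ExpWaves.

Variables (N : nat) (tau : R) (L : (R -> nat -> R) -> nat -> R) (M b : R).
Hypothesis hM : L_bounded_by N tau L M.

Lemma L_bound_abs f c i : in_CN N tau f -> 0 <= c ->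
  (forall t k, - tau <= t <= 0 -> (k < N)%nat -> Rabs (f t k) <= c) -> (i < N)%nat ->
  Rabs (L f i) <= Rabs M * c.
Proof.
intros Hf Hc Hb Hi; eapply Rle_trans; [apply (hM f c Hf Hb i Hi)|].
apply Rmult_le_compat_r; [exact Hc | apply RRle_abs].
Qed.

Lemma L_exp_wave_bound y w j i :
  (forall x, continuity_pt w x) -> (forall u, Rabs (w u) <= 1) -> (i < N)%nat ->
  Rabs (L (exp_wave b y w j) i) <= Rabs M * exp (Rabs b * tau).
Proof.
intros Hc Hw Hi; apply L_bound_abs; [apply exp_wave_CN, Hc | left; apply exp_pos | | exact Hi].
intros t k Ht Hk; unfold exp_wave; destruct (k =? j)%nat; [|rewrite Rabs_R0; left; apply exp_pos].
rewrite Rabs_mult, Rabs_pos_eq by (left; apply exp_pos).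
pose proof (exp_le_window b tau t Ht); pose proof (exp_pos (b * t)); pose proof (Hw (y * t)).
pose proof (Rabs_pos (w (y * t))); nra.
Qed.

Lemma L_exp_wave_lipschitz y y' w j i : 0 <= tau -> bounded_linear N tau L ->
  (forall x, continuity_pt w x) -> (forall u v, Rabs (w u - w v) <= Rabs (u - v)) ->
  (i < N)%nat ->
  Rabs (L (exp_wave b y w j) i - L (exp_wave b y' w j) i)
    <= Rabs M * (exp (Rabs b * tau) * tau * Rabs (y - y')).
Proof.
intros htau hL Hc Hw Hi; rewrite (L_sub N tau L) by (try apply exp_wave_CN; assumption).
pose proof (exp_pos (Rabs b * tau)); pose proof (Rabs_pos (y - y')).
apply L_bound_abs; [| apply Rmult_le_pos; [nra | assumption] | | exact Hi].
{ apply in_CN_add; [|apply in_CN_scal]; apply exp_wave_CN, Hc. }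
intros t k Ht Hk; unfold exp_wave; destruct (k =? j)%nat.
- replace (exp (b * t) * w (y * t) + -1 * (exp (b * t) * w (y' * t)))
    with (exp (b * t) * (w (y * t) - w (y' * t))) by ring.
  rewrite Rabs_mult, Rabs_pos_eq by (left; apply exp_pos).
  pose proof (Hw (y * t) (y' * t)) as Hwt.
  replace (y * t - y' * t) with ((y - y') * t) in Hwt by ring; rewrite Rabs_mult in Hwt.
  assert (Rabs t <= tau) by (apply Rabs_le; lra).
  pose proof (exp_le_window b tau t Ht); pose proof (exp_pos (b * t)); pose proof (Rabs_pos t).
  pose proof (Rabs_pos (w (y * t) - w (y' * t))).
  assert (Rabs (w (y * t) - w (y' * t)) <= tau * Rabs (y - y')) by nra.
  apply Rle_trans with (exp (b * t) * (tau * Rabs (y - y'))); nra.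
- replace (0 + -1 * 0) with 0 by ring; rewrite Rabs_R0.
  apply Rmult_le_pos; [apply Rmult_le_pos|]; lra.
Qed.

Lemma Lexp_bound y i j : (i < N)%nat ->
  Cmod (Lexp L (mkC b y) i j) <= 2 * (Rabs M * exp (Rabs b * tau)).
Proof.
intros Hi; rewrite Lexp_waves; eapply Rle_trans; [apply Cmod_le_Re_Im|]; simpl.
pose proof (L_exp_wave_bound y cos j i continuity_cos (fun u => Rabs_le _ _ (COS_bound u)) Hi).
pose proof (L_exp_wave_bound y sin j i continuity_sin (fun u => Rabs_le _ _ (SIN_bound u)) Hi).
lra.
Qed.

Lemma Lexp_lipschitz y y' i j : 0 <= tau -> bounded_linear N tau L -> (i < N)%nat ->
  Cmod (Csub (Lexp L (mkC b y) i j) (Lexp L (mkC b y') i j))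
    <= 2 * (Rabs M * (exp (Rabs b * tau) * tau)) * Rabs (y - y').
Proof.
intros htau hL Hi; rewrite !Lexp_waves; eapply Rle_trans; [apply Cmod_le_Re_Im|]; simpl.
pose proof (L_exp_wave_lipschitz y y' cos j i htau hL continuity_cos cos_lipschitz Hi).
pose proof (L_exp_wave_lipschitz y y' sin j i htau hL continuity_sin sin_lipschitz Hi).
unfold Rminus in *; lra.
Qed.

End ExpWaves.

Definition weight (eps : R) (s : C) : R := Cmod s * (1 + eps * eps * Cmod s).

Lemma Cmod_le_weight eps s : Cmod s <= weight eps s.
Proof.
unfold weight; pose proof (Cmod_ge0 s).
assert (0 <= eps * eps * Cmod s) by (apply Rmult_le_pos; nra); nra.
Qed.

Lemma weight_le eps s S : 0 <= eps <= 1 -> Cmod s <= S -> weight eps s <= S * (1 + S).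
Proof.
intros He Hs; unfold weight; pose proof (Cmod_ge0 s).
assert (eps * eps * Cmod s <= 1 * S) by (apply Rmult_le_compat; nra).
apply Rmult_le_compat; nra.
Qed.

Lemma weight_split eps s p B : 0 <= p -> weight eps s * p <= B ->
  Cmod s * p <= B /\ eps * eps * (Cmod s * Cmod s) * p <= B.
Proof.
unfold weight; intros Hp HB; pose proof (Cmod_ge0 s).
assert (0 <= Cmod s * p) by (apply Rmult_le_pos; lra).
assert (0 <= eps * eps * (Cmod s * Cmod s) * p)
  by (apply Rmult_le_pos; [apply Rmult_le_pos|]; nra).
split; nra.
Qed.

Lemma lam_mu eps s : lam eps s = Cmul s (mu eps s).
Proof. apply C_ext; simpl; ring. Qed.

Lemma Cmod_mu_le eps s : Cmod (mu eps s) <= 1 + eps * eps * Cmod s.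
Proof.
unfold mu; eapply Rle_trans; [apply Cmod_sub|].
rewrite Cmod_mul, Cmod_RtoC, Cmod_C1, Rabs_pos_eq by nra; lra.
Qed.

Lemma Cmod_lam_le eps s : 0 <= eps <= 1 -> Cmod (lam eps s) <= Cmod s * Cmod s + Cmod s.
Proof.
intros He; rewrite lam_mu, Cmod_mul; pose proof (Cmod_mu_le eps s); pose proof (Cmod_ge0 s).
assert (eps * eps * Cmod s <= 1 * Cmod s) by (apply Rmult_le_compat_r; nra).
assert (Cmod s * Cmod (mu eps s) <= Cmod s * (1 + eps * eps * Cmod s))
  by (apply Rmult_le_compat_l; lra).
assert (Cmod s * (eps * eps * Cmod s) <= Cmod s * Cmod s) by (apply Rmult_le_compat_l; lra).
lra.
Qed.

(* On the line [Re s = b], [|eps^2 s - 1|] stays comparable to [1 + eps^2 |s|] as long as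
   [eps^2 |b| <= 1/2]. *)
Lemma weight_le_lam eps b y : 0 <= eps <= 1 -> eps * eps * Rabs b <= 1 / 2 ->
  weight eps (mkC b y) <= 5 * Cmod (lam eps (mkC b y)).
Proof.
intros He Hb; unfold weight; rewrite lam_mu, Cmod_mul.
set (u := eps * eps) in *; assert (Hu : 0 <= u) by (unfold u; nra).
pose proof (Cmod_ge0 (mkC b y)) as Hs.
assert (Hle : 1 + u * Cmod (mkC b y) <= 3 / 2 + u * Rabs y).
{ pose proof (Cmod_le_Re_Im (mkC b y)); simpl in *; nra. }
assert (Hge : (3 / 2 + u * Rabs y) / 5 <= Cmod (mu eps (mkC b y))).
{ apply Cmod_ge_sq; [pose proof (Rabs_pos y); nra|]; simpl; fold u.
  assert (Hub : u * b <= 1 / 2) by (pose proof (RRle_abs b); nra).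
  assert (Hy2 : y * y = Rabs y * Rabs y) by (rewrite <- Rabs_mult, Rabs_pos_eq; nra).
  replace ((u * y + 0 * b + - 0) * (u * y + 0 * b + - 0))
    with ((u * Rabs y) * (u * Rabs y))
    by (transitivity (u * u * (Rabs y * Rabs y)); [| rewrite <- Hy2]; ring).
  assert (1 / 4 <= (u * b - 0 * y + - (1)) * (u * b - 0 * y + - (1))) by nra.
  set (v := u * Rabs y); pose proof (Rle_0_sqr (v - 1 / 16)); unfold Rsqr in *; nra. }
nra.
Qed.

Section Estimates.

Variables (N : nat) (tau : R) (L : (R -> nat -> R) -> nat -> R) (M b : R).
Hypothesis htau : 0 <= tau.
Hypothesis hL : bounded_linear N tau L.
Hypothesis hM : L_bounded_by N tau L M.

Let K0 := 2 * (Rabs M * exp (Rabs b * tau)).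

Lemma K0_ge0 : 0 <= K0.
Proof. unfold K0; pose proof (Rabs_pos M); pose proof (exp_pos (Rabs b * tau)); nra. Qed.

Lemma entries_le_Lexp y : entries_le N (Lexp L (mkC b y)) K0.
Proof. intros i j Hi _; apply (Lexp_bound N tau L M b hM y i j Hi). Qed.

Lemma entries_le_DeltaE eps y : 0 <= eps <= 1 ->
  entries_le N (DeltaE L eps (mkC b y))
    (Cmod (mkC b y) * Cmod (mkC b y) + Cmod (mkC b y) + K0).
Proof.
intros He i j Hi Hj; rewrite DeltaE_shift.
eapply Rle_trans; [apply (entries_le_shift N _ _ K0 (entries_le_Lexp y)); assumption|].
pose proof (Cmod_lam_le eps (mkC b y) He); lra.
Qed.

Lemma det_DeltaE0_continuous c : continuity_pt (fun y => Cmod (det N (DeltaE L 0 (mkC b y)))) c.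
Proof.
set (S := Rabs b + Rabs c + 1).
assert (HS : 0 <= S) by (unfold S; pose proof (Rabs_pos b); pose proof (Rabs_pos c); lra).
pose proof K0_ge0.
apply (Cmod_det_continuity N _ c (S * S + S + K0)
         (1 + 2 * (Rabs M * (exp (Rabs b * tau) * tau)))); [nra | | |].
- pose proof (Rabs_pos M); pose proof (exp_pos (Rabs b * tau)).
  assert (0 <= Rabs M * (exp (Rabs b * tau) * tau)) by (apply Rmult_le_pos; nra); lra.
- intros y Hy i j Hi Hj.
  assert (Hs : Cmod (mkC b y) <= S).
  { eapply Rle_trans; [apply Cmod_le_Re_Im|]; simpl; unfold S.
    pose proof (Rabs_triang_inv y c); lra. }
  eapply Rle_trans; [apply entries_le_DeltaE; [lra | assumption | assumption]|].
  pose proof (Cmod_ge0 (mkC b y)); nra.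
- intros y i j Hi Hj; rewrite !DeltaE_shift; unfold shift_mx.
  replace (Csub (Cadd (Cmul (lam 0 (mkC b y)) (delta i j)) (Lexp L (mkC b y) i j))
                (Cadd (Cmul (lam 0 (mkC b c)) (delta i j)) (Lexp L (mkC b c) i j)))
    with (Cadd (Cmul (mkC 0 (c - y)) (delta i j))
               (Csub (Lexp L (mkC b y) i j) (Lexp L (mkC b c) i j)))
    by (apply C_ext; simpl; ring).
  eapply Rle_trans; [apply Cmod_add|]; rewrite Cmod_mul.
  assert (Cmod (mkC 0 (c - y)) <= Rabs (y - c)).
  { eapply Rle_trans; [apply Cmod_le_Re_Im|]; simpl.
    rewrite Rabs_R0, Rabs_minus_sym; lra. }
  pose proof (Cmod_delta i j); pose proof (Cmod_ge0 (mkC 0 (c - y))).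
  pose proof (Lexp_lipschitz N tau L M b hM y c i j htau hL Hi).
  nra.
Qed.

Lemma det_DeltaE_perturb eps y S : 0 <= eps <= 1 -> Cmod (mkC b y) <= S ->
  Cmod (Csub (det N (DeltaE L eps (mkC b y))) (det N (DeltaE L 0 (mkC b y))))
    <= det_lip_const N (S * S + S + K0) * (eps * eps * (S * S)).
Proof.
intros He Hs; pose proof (Cmod_ge0 (mkC b y)); pose proof K0_ge0.
assert (HE : forall e, 0 <= e <= 1 -> entries_le N (DeltaE L e (mkC b y)) (S * S + S + K0)).
{ intros e He' i j Hi Hj; eapply Rle_trans; [apply entries_le_DeltaE; assumption|]; nra. }
apply det_lipschitz; [nra | apply HE; assumption | apply HE; lra |].
intros i j Hi Hj; rewrite !DeltaE_shift; unfold shift_mx.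
replace (Csub (Cadd (Cmul (lam eps (mkC b y)) (delta i j)) (Lexp L (mkC b y) i j))
              (Cadd (Cmul (lam 0 (mkC b y)) (delta i j)) (Lexp L (mkC b y) i j)))
  with (Cmul (Cmul (RtoC (eps * eps)) (Cmul (mkC b y) (mkC b y))) (delta i j))
  by (apply C_ext; simpl; ring).
rewrite !Cmod_mul, Cmod_RtoC, Rabs_pos_eq by nra.
pose proof (Cmod_delta i j); pose proof (Cmod_ge0 (delta i j)).
assert (Cmod (mkC b y) * Cmod (mkC b y) <= S * S) by nra.
assert (0 <= eps * eps) by nra.
assert (eps * eps * (Cmod (mkC b y) * Cmod (mkC b y)) <= eps * eps * (S * S)) by nra.
nra.
Qed.

Lemma det_DeltaE_lower eps y S m0 : 0 <= eps <= 1 -> Cmod (mkC b y) <= S ->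
  m0 <= Cmod (det N (DeltaE L 0 (mkC b y))) ->
  det_lip_const N (S * S + S + K0) * (eps * eps * (S * S)) <= m0 / 2 ->
  m0 / 2 <= Cmod (det N (DeltaE L eps (mkC b y))).
Proof.
intros He Hs H0 Hsmall; pose proof (det_DeltaE_perturb eps y S He Hs).
pose proof (Cmod_triang_inv (det N (DeltaE L eps (mkC b y))) (det N (DeltaE L 0 (mkC b y))))
  as Htri.
apply Rabs_le_inv in Htri; lra.
Qed.

(* On a bounded piece [|Im s| <= Y] of the line, [|det Delta_0|] has a positive minimum by
   continuity, and for small [eps] the perturbation [eps^2 s^2 I] cannot destroy it. *)
Lemma inv_DeltaE_near Y : 0 <= Y ->
  (forall y, det N (DeltaE L 0 (mkC b y)) <> C0) ->
  exists e1 C, 0 < e1 <= 1 /\ forall eps y i j, 0 <= eps <= e1 -> Rabs y <= Y ->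
    (i < N)%nat -> (j < N)%nat -> Cmod (inv N (DeltaE L eps (mkC b y)) i j) <= C.
Proof.
intros HY hdet0.
destruct (continuity_ab_min (fun y => Cmod (det N (DeltaE L 0 (mkC b y)))) (- Y) Y)
  as [ymin [Hmin _]]; [lra | intros; apply det_DeltaE0_continuous|].
set (m0 := Cmod (det N (DeltaE L 0 (mkC b ymin)))) in Hmin.
assert (Hm0 : 0 < m0) by apply Cmod_gt0, hdet0.
set (S := Rabs b + Y); set (K2 := S * S + S + K0).
assert (HS : 0 <= S) by (unfold S; pose proof (Rabs_pos b); lra).
assert (HK2 : 0 <= K2) by (unfold K2; pose proof K0_ge0; nra).
set (Lp := det_lip_const N K2 * (S * S)).
assert (HLp : 0 <= Lp) by (unfold Lp; pose proof (det_lip_const_ge0 N K2 HK2); nra).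
destruct (small_factor_exists (m0 / 2) Lp ltac:(lra) HLp) as [e1 [He1 He1m]].
exists e1, (INR (fact (pred N)) * K2 ^ pred N / (m0 / 2)); split; [exact He1|].
intros eps y i j He Hy Hi Hj.
assert (Hs : Cmod (mkC b y) <= S).
{ eapply Rle_trans; [apply Cmod_le_Re_Im|]; simpl; unfold S; lra. }
apply inv_entry_bound; try assumption; [lra | |].
- intros k l Hk Hl; eapply Rle_trans; [apply entries_le_DeltaE; [lra | assumption | assumption]|].
  unfold K2; pose proof (Cmod_ge0 (mkC b y)); nra.
- apply (det_DeltaE_lower eps y S m0); [lra | exact Hs | apply Hmin; apply Rabs_le_inv in Hy; lra|].
  fold K2; replace (det_lip_const N K2 * (eps * eps * (S * S))) with (eps * eps * Lp)
    by (unfold Lp; ring).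
  apply Rle_trans with (e1 * Lp); [apply Rmult_le_compat_r; nra | exact He1m].
Qed.

Lemma inv_DeltaE_far eps y i j : 0 <= eps <= 1 -> eps * eps * Rabs b <= 1 / 2 ->
  det N (DeltaE L eps (mkC b y)) <> C0 -> 10 * INR N * K0 <= Rabs y ->
  (i < N)%nat -> (j < N)%nat ->
  weight eps (mkC b y) * Cmod (inv N (DeltaE L eps (mkC b y)) i j) <= 10.
Proof.
intros He Hb Hdet Hy Hi Hj.
pose proof (weight_le_lam eps b y He Hb) as Hw.
pose proof (Cmod_le_weight eps (mkC b y)); pose proof (Rabs_Im_le (mkC b y)); simpl in *.
rewrite DeltaE_shift in *.
assert (Hlam : 2 * INR N * K0 <= Cmod (lam eps (mkC b y))) by lra.
pose proof (inv_shift_large N _ _ K0 i j (entries_le_Lexp y) Hdet Hlam Hi Hj).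
pose proof (Cmod_ge0 (inv N (shift_mx (lam eps (mkC b y)) (Lexp L (mkC b y))) i j)).
nra.
Qed.

Lemma inv_DeltaE_weighted eps0 : 0 < eps0 ->
  (forall eps y, 0 <= eps <= eps0 -> det N (DeltaE L eps (mkC b y)) <> C0) ->
  exists e1, 0 < e1 <= eps0 /\ exists B, forall eps y i j, 0 <= eps <= e1 ->
    (i < N)%nat -> (j < N)%nat ->
    weight eps (mkC b y) * Cmod (inv N (DeltaE L eps (mkC b y)) i j) <= B.
Proof.
intros Heps0 hdet.
set (Y := 10 * INR N * K0).
assert (HY : 0 <= Y) by (unfold Y; pose proof (pos_INR N); pose proof K0_ge0; nra).
destruct (inv_DeltaE_near Y HY (fun y => hdet 0 y ltac:(lra))) as [e2 [C [He2 HC]]].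
pose proof (Rabs_pos b) as Hb0.
destruct (small_factor_exists 1 (2 * Rabs b + 1) ltac:(lra) ltac:(lra)) as [e3 [He3 He3b]].
exists (Rmin (Rmin eps0 e2) e3).
pose proof (Rmin_l (Rmin eps0 e2) e3); pose proof (Rmin_r (Rmin eps0 e2) e3).
pose proof (Rmin_l eps0 e2); pose proof (Rmin_r eps0 e2).
split; [split; [repeat apply Rmin_glb_lt|]; lra|].
set (S := Rabs b + Y); exists (Rmax 10 (S * (1 + S) * C)).
intros eps y i j He Hi Hj.
assert (Hb : eps * eps * Rabs b <= 1 / 2).
{ assert (eps * (2 * Rabs b + 1) <= 1) by (apply Rle_trans with (e3 * (2 * Rabs b + 1)); nra).
  assert (eps * eps <= eps) by nra; nra. }
destruct (Rle_lt_dec Y (Rabs y)) as [Hfar | Hnear].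
- eapply Rle_trans; [|apply Rmax_l].
  apply inv_DeltaE_far; try assumption; [lra | apply hdet; lra].
- eapply Rle_trans; [|apply Rmax_r].
  specialize (HC eps y i j ltac:(lra) ltac:(lra) Hi Hj).
  assert (Hs : Cmod (mkC b y) <= S).
  { eapply Rle_trans; [apply Cmod_le_Re_Im|]; simpl; unfold S; lra. }
  pose proof (weight_le eps (mkC b y) S ltac:(lra) Hs).
  pose proof (Cmod_ge0 (inv N (DeltaE L eps (mkC b y)) i j)).
  pose proof (Cmod_le_weight eps (mkC b y)); pose proof (Cmod_ge0 (mkC b y)).
  apply Rmult_le_compat; lra.
Qed.

Lemma inv_Dmat_bound eps y B i j : 0 < eps <= 1 -> det N (DeltaE L eps (mkC b y)) <> C0 ->
  (forall k l, (k < N)%nat -> (l < N)%nat ->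
     weight eps (mkC b y) * Cmod (inv N (DeltaE L eps (mkC b y)) k l) <= B) ->
  (i < 2 * N)%nat -> (j < 2 * N)%nat ->
  Cmod (mkC b y) * Cmod (inv (2 * N) (Dmat N L eps (mkC b y)) i j) <= (1 + INR N * K0) * B.
Proof.
intros He Hdet HB Hi Hj.
rewrite (ComplexMatrix.inv_Dmat N L eps (mkC b y) i j ltac:(lra) Hdet Hi Hj); cbv zeta.
set (s := mkC b y) in *; set (P := inv N (DeltaE L eps s)) in *.
assert (HP : forall k l, (k < N)%nat -> (l < N)%nat ->
          Cmod s * Cmod (P k l) <= B /\ eps * eps * (Cmod s * Cmod s) * Cmod (P k l) <= B)
  by (intros; apply weight_split; [apply Cmod_ge0 | apply HB; assumption]).
assert (HB0 : 0 <= B).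
{ destruct (HP O O ltac:(lia) ltac:(lia)) as [HB0 _].
  pose proof (Cmod_ge0 s); pose proof (Cmod_ge0 (P O O)); nra. }
pose proof (Cmod_ge0 s); pose proof K0_ge0; pose proof (pos_INR N).
assert (HBM : B <= (1 + INR N * K0) * B) by (assert (0 <= INR N * K0) by nra; nra).
apply (blockc_forall (fun z => Cmod s * Cmod z <= (1 + INR N * K0) * B)); try assumption;
  intros k l Hk Hl; destruct (HP k l Hk Hl) as [Hw1 Hw2]; pose proof (Cmod_ge0 (P k l)).
- rewrite Cmod_mul; pose proof (Cmod_mu_le eps s); pose proof (Cmod_ge0 (mu eps s)).
  apply Rle_trans with (Cmod s * ((1 + eps * eps * Cmod s) * Cmod (P k l)));
    [apply Rmult_le_compat_l, Rmult_le_compat_r; assumption|].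
  rewrite <- Rmult_assoc; apply Rle_trans with B; [apply HB | ]; assumption.
- rewrite Cmod_mul, Cmod_RtoC, Rabs_pos_eq by nra.
  replace (Cmod s * (eps * eps * Cmod (P k l))) with (eps * eps * (Cmod s * Cmod (P k l)))
    by ring.
  assert (0 <= Cmod s * Cmod (P k l)) by nra.
  apply Rle_trans with (1 * (Cmod s * Cmod (P k l))); [apply Rmult_le_compat_r|]; nra.
- rewrite Cmod_opp, <- Cmod_mul, Cmul_Csum.
  apply Rle_trans with (INR N * (K0 * B)); [apply Csum_bound; intros m Hm | nra].
  replace (Cmul s (Cmul (Lexp L s k m) (P m l))) with (Cmul (Lexp L s k m) (Cmul s (P m l)))
    by (apply C_ext; simpl; ring).
  rewrite !Cmod_mul; apply Rmult_le_compat;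
    [apply Cmod_ge0 | apply Rmult_le_pos; apply Cmod_ge0 |
     apply (entries_le_Lexp y k m Hk Hm) | apply (HP m l Hm Hl)].
- rewrite !Cmod_mul, Cmod_RtoC, Rabs_pos_eq by nra.
  replace (Cmod s * (eps * eps * Cmod s * Cmod (P k l)))
    with (eps * eps * (Cmod s * Cmod s) * Cmod (P k l)) by ring.
  lra.
Qed.

End Estimates.

Theorem lemma4p2 (N : nat) (tau : R) (L : (R -> nat -> R) -> nat -> R)
  (htau : 0 <= tau) (hL : bounded_linear N tau L)
  (b eps0 : R) (heps0 : 0 < eps0 < 1)
  (hdet : forall eps y, 0 <= eps <= eps0 -> det N (DeltaE L eps (mkC b y)) <> C0) :
  exists eps1, 0 < eps1 <= eps0 /\
    (exists M, forall eps y, 0 <= eps <= eps1 -> forall i j, (i < N)%nat -> (j < N)%nat ->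
        Cmod (mkC b y) * Cmod (inv N (DeltaE L eps (mkC b y)) i j) <= M) /\
    (exists M, forall eps y, 0 < eps <= eps1 -> forall i j, (i < 2 * N)%nat -> (j < 2 * N)%nat ->
        Cmod (mkC b y) * Cmod (inv (2 * N)%nat (Dmat N L eps (mkC b y)) i j) <= M).
Proof.
pose proof hL as [_ [_ [M hM]]].
destruct (inv_DeltaE_weighted N tau L M b htau hL hM eps0 ltac:(lra) hdet)
  as [eps1 [Heps1 [B HB]]].
exists eps1; split; [exact Heps1 | split].
- exists B; intros eps y He i j Hi Hj.
  apply Rle_trans with (weight eps (mkC b y) * Cmod (inv N (DeltaE L eps (mkC b y)) i j)).
  + apply Rmult_le_compat_r; [apply Cmod_ge0 | apply Cmod_le_weight].
  + apply HB; assumption.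
- exists ((1 + INR N * (2 * (Rabs M * exp (Rabs b * tau)))) * B); intros eps y He i j Hi Hj.
  apply (inv_Dmat_bound N tau L M b hM); try assumption; [lra | apply hdet; lra |].
  intros k l Hk Hl; apply HB; [lra | assumption | assumption].
Qed.
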